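(* Let $X$ be a Minkowski space whose closed unit ball $B$ is a polytope, and let $f$ be the largest number of facets (faces of codimension one within the face itself) that a proper face of $B$ can have. Then $m(X)\geq f$.
   Context: A Minkowski space is a finite-dimensional real normed space $(X,\|\cdot\|)$. For a set $S\subseteq X$, its midpoint set is $M(S)=\{\tfrac12(x+y): x,y\in S,\ x\neq y\}$. A set $S\subseteq X$ is an M-set if every vector in $M(S)$ has norm exactly $1$ and every vector in $S$ has norm strictly greater than $1$. $m(X)$ denotes the largest cardinality of an M-set in $X$ if such a largest finite cardinality exists, and $m(X)=\infty$ otherwise. *)

From Stdlib Require Import Reals List ZArith.
From Stdlib Require Fin.
Import ListNotations.
Open Scope R_scope.

(** The space R^n: vectors are functions Fin.t n -> R, with pointwise operations.
    Every Minkowski space (finite-dim. real normed space) is isomorphic to some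
    (R^n, N) with N a norm. *)
Definition Vec (n : nat) : Type := Fin.t n -> R.

Definition vzero {n} : Vec n := fun _ => 0.
Definition vadd {n} (x y : Vec n) : Vec n := fun i => x i + y i.
Definition vscale {n} (c : R) (x : Vec n) : Vec n := fun i => c * x i.

Definition lincomb {n} (cs : list R) (vs : list (Vec n)) : Vec n :=
  fold_right (fun p acc => vadd (vscale (fst p) (snd p)) acc) vzero (combine cs vs).

Definition sumR (cs : list R) : R := fold_right Rplus 0 cs.

Definition is_norm {n} (N : Vec n -> R) : Prop :=
  (forall x, 0 <= N x) /\
  (forall x, N x = 0 -> x = vzero) /\
  (forall c x, N (vscale c x) = Rabs c * N x) /\
  (forall x y, N (vadd x y) <= N x + N y).

Definition vset (n : nat) := Vec n -> Prop.
Definition same_set {n} (A B : vset n) : Prop := forall x, A x <-> B x.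

Definition unit_ball {n} (N : Vec n -> R) : vset n := fun x => N x <= 1.

Definition conv {n} (l : list (Vec n)) : vset n := fun x =>
  exists lam : list R, length lam = length l /\ Forall (fun c => 0 <= c) lam /\
    sumR lam = 1 /\ x = lincomb lam l.

Definition is_polytope {n} (P : vset n) : Prop :=
  exists l : list (Vec n), same_set P (conv l).

Definition linear_functional {n} (phi : Vec n -> R) : Prop :=
  (forall x y, phi (vadd x y) = phi x + phi y) /\
  (forall c x, phi (vscale c x) = c * phi x).

(** F is a face of the polytope P: F = P ∩ {phi = c} where phi <= c on P
    (phi = 0, c = 0 gives P itself; phi = 0, c = 1 gives the empty face). *)
Definition face_of {n} (P F : vset n) : Prop :=
  exists (phi : Vec n -> R) (c : R), linear_functional phi /\
    (forall y, P y -> phi y <= c) /\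
    same_set F (fun x => P x /\ phi x = c).

Definition proper_face_of {n} (P F : vset n) : Prop :=
  face_of P F /\ ~ same_set F P.

Definition aff_indep {n} (l : list (Vec n)) : Prop :=
  forall cs : list R, length cs = length l -> sumR cs = 0 ->
    lincomb cs l = vzero -> Forall (fun c => c = 0) cs.

Definition has_aff_indep {n} (S : vset n) (k : nat) : Prop :=
  exists l : list (Vec n), length l = k /\ NoDup l /\ Forall S l /\ aff_indep l.

(** Affine dimension of S is d (d = -1 for the empty set). *)
Definition aff_dim {n} (S : vset n) (d : Z) : Prop :=
  exists k : nat, d = (Z.of_nat k - 1)%Z /\ has_aff_indep S k /\ ~ has_aff_indep S (Datatypes.S k).

Definition facet_of {n} (F G : vset n) : Prop :=
  face_of F G /\ exists d : Z, aff_dim F d /\ aff_dim G (d - 1)%Z.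

Definition family_card {n} (Q : vset n -> Prop) (k : nat) : Prop :=
  exists l : list (vset n), length l = k /\ Forall Q l /\
    (forall i j, (i < k)%nat -> (j < k)%nat -> i <> j ->
        ~ same_set (nth i l (fun _ => False)) (nth j l (fun _ => False))) /\
    (forall A, Q A -> exists B, In B l /\ same_set A B).

Definition num_facets {n} (F : vset n) (k : nat) : Prop := family_card (facet_of F) k.

Definition max_facets_proper_face {n} (P : vset n) (f : nat) : Prop :=
  (exists F, proper_face_of P F /\ num_facets F f) /\
  (forall F k, proper_face_of P F -> num_facets F k -> (k <= f)%nat).

Definition midpoint {n} (x y : Vec n) : Vec n := vscale (1/2) (vadd x y).

Definition M_set {n} (N : Vec n -> R) (S : vset n) : Prop :=
  (forall x y, S x -> S y -> x <> y -> N (midpoint x y) = 1) /\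
  (forall x, S x -> N x > 1).

Definition set_card {n} (S : vset n) (k : nat) : Prop :=
  exists l : list (Vec n), NoDup l /\ length l = k /\ forall x, S x <-> In x l.

Definition is_max_Mset_card {n} (N : Vec n -> R) (k : nat) : Prop :=
  (exists S, M_set N S /\ set_card S k) /\
  (forall S, M_set N S -> exists l : list (Vec n), (length l <= k)%nat /\ forall x, S x -> In x l).

(** m(X) as an extended natural: Some k if the largest cardinality k exists, None = infinity. *)
Definition m_value {n} (N : Vec n -> R) (v : option nat) : Prop :=
  match v with
  | Some k => is_max_Mset_card N k
  | None => ~ exists k, is_max_Mset_card N k
  end.

Definition enat_ge (v : option nat) (f : nat) : Prop :=
  match v with Some k => (f <= k)%nat | None => True end.

(* Let F = B ∩ {phi = c}, c > 0, be a proper face with facets G_i = F ∩ {psi_i = c_i}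
   (i < f), let q_i be the barycenter of an affine basis of G_i and r the average of
   the q_i, so that psi_i r < c_i for every i.  For small eps > 0 the points
   x_i = (1 + eps) q_i - eps r lie on the hyperplane {phi = c} but not in F, since
   psi_i x_i > c_i; hence N x_i > 1.  Writing r in the affine basis of F made of the
   basis of G_i and a vertex of G_j off G_i shows that the midpoint of x_i and x_j is a
   convex combination of vertices of G_i and G_j, so it lies in F and has norm 1. *)

From Stdlib Require Import Reals List Lra Lia.
From Stdlib Require Import Classical FunctionalExtensionality IndefiniteDescription.
Import ListNotations.
Open Scope R_scope.

(** * Finite sums and linear combinations *)

Fixpoint rsum (m : nat) (g : nat -> R) : R :=
  match m with O => 0 | S m' => rsum m' g + g m' end.

Lemma rsum_ext m g h : (forall t, (t < m)%nat -> g t = h t) -> rsum m g = rsum m h.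
Proof.
  induction m as [|m IH]; simpl; intros H; auto.
  rewrite IH by (intros; apply H; lia). rewrite H by lia. reflexivity.
Qed.

Lemma rsum_add m g h : rsum m (fun t => g t + h t) = rsum m g + rsum m h.
Proof. induction m; simpl; [ring | rewrite IHm; ring]. Qed.

Lemma rsum_scale m a g : rsum m (fun t => a * g t) = a * rsum m g.
Proof. induction m; simpl; [ring | rewrite IHm; ring]. Qed.

Lemma rsum_const m a : rsum m (fun _ => a) = INR m * a.
Proof. induction m; simpl rsum; [simpl; ring | rewrite IHm, S_INR; ring]. Qed.

Lemma rsum_le m g h : (forall t, (t < m)%nat -> g t <= h t) -> rsum m g <= rsum m h.
Proof.
  induction m as [|m IH]; simpl; intros H; [lra|].
  assert (rsum m g <= rsum m h) by (apply IH; intros; apply H; lia).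
  assert (g m <= h m) by (apply H; lia). lra.
Qed.

Lemma rsum_lt m g h t0 : (forall t, (t < m)%nat -> g t <= h t) -> (t0 < m)%nat ->
  g t0 < h t0 -> rsum m g < rsum m h.
Proof.
  induction m as [|m IH]; simpl; intros H Ht0 Hlt; [lia|].
  assert (g m <= h m) by (apply H; lia).
  destruct (Nat.eq_dec t0 m) as [->|Hne].
  - assert (rsum m g <= rsum m h) by (apply rsum_le; intros; apply H; lia). lra.
  - assert (rsum m g < rsum m h) by (apply IH; [intros; apply H; lia | lia | auto]). lra.
Qed.

Lemma rsum_nonneg m g : (forall t, (t < m)%nat -> 0 <= g t) -> 0 <= rsum m g.
Proof.
  intros H. replace 0 with (rsum m (fun _ => 0)) by (rewrite rsum_const; ring).
  apply rsum_le; auto.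
Qed.

Lemma rsum_ge_term m g t0 : (forall t, (t < m)%nat -> 0 <= g t) -> (t0 < m)%nat ->
  g t0 <= rsum m g.
Proof.
  induction m as [|m IH]; simpl; intros H Ht0; [lia|].
  assert (0 <= rsum m g) by (apply rsum_nonneg; intros; apply H; lia).
  assert (0 <= g m) by (apply H; lia).
  destruct (Nat.eq_dec t0 m) as [->|Hne]; [lra|].
  assert (g t0 <= rsum m g) by (apply IH; [intros; apply H; lia | lia]). lra.
Qed.

Lemma rsum_split a b g : rsum (a + b) g = rsum a g + rsum b (fun t => g (a + t)%nat).
Proof.
  induction b as [|b IH]; [rewrite Nat.add_0_r; simpl; ring|].
  rewrite Nat.add_succ_r. simpl. rewrite IH. ring.
Qed.

Lemma rsum_uniform m : (1 <= m)%nat -> rsum m (fun _ => / INR m) = 1.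
Proof. intros Hm. rewrite rsum_const. field. apply not_0_INR. lia. Qed.

Lemma uniform_weight_pos m : (1 <= m)%nat -> 0 <= / INR m.
Proof. intros Hm. left. apply Rinv_0_lt_compat, lt_0_INR. lia. Qed.

(** Families of points or weights are indexed by [nat]; only indices below the
    relevant length matter. *)
Definition unit_weight (t0 : nat) (v : R) : nat -> R :=
  fun t => if Nat.eq_dec t t0 then v else 0.

Definition snoc_fam {A} (P : nat -> A) (m : nat) (y : A) : nat -> A :=
  fun t => if Nat.eq_dec t m then y else P t.

Definition fam_app {A} (K : nat) (P Q : nat -> A) : nat -> A :=
  fun t => if (t <? K)%nat then P t else Q (t - K)%nat.

Lemma rsum_unit_weight m t0 v : (t0 < m)%nat -> rsum m (unit_weight t0 v) = v.
Proof.
  induction m as [|m IH]; intros H; [lia|]. simpl. unfold unit_weight at 2.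
  destruct (Nat.eq_dec m t0) as [->|Hne].
  - rewrite (rsum_ext _ _ (fun _ => 0)), rsum_const; [ring|].
    intros t Ht. unfold unit_weight. destruct (Nat.eq_dec t t0); [lia | auto].
  - rewrite IH by lia. ring.
Qed.

Lemma snoc_fam_lt {A} (P : nat -> A) m y t : (t < m)%nat -> snoc_fam P m y t = P t.
Proof. intros; unfold snoc_fam; destruct (Nat.eq_dec t m); [lia | auto]. Qed.

Lemma snoc_fam_last {A} (P : nat -> A) m y : snoc_fam P m y m = y.
Proof. unfold snoc_fam; destruct (Nat.eq_dec m m); [auto | lia]. Qed.

Lemma rsum_fam_app K K' a b : rsum (K + K') (fam_app K a b) = rsum K a + rsum K' b.
Proof.
  rewrite rsum_split. f_equal; apply rsum_ext; intros t Ht; unfold fam_app.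
  - destruct (Nat.ltb_spec t K); [auto | lia].
  - destruct (Nat.ltb_spec (K + t) K); [lia|]. f_equal; lia.
Qed.

Definition vcomb {n} (m : nat) (w : nat -> R) (P : nat -> Vec n) : Vec n :=
  fun o => rsum m (fun t => w t * P t o).

Lemma vcomb_S {n} m w (P : nat -> Vec n) :
  vcomb (S m) w P = vadd (vcomb m w P) (vscale (w m) (P m)).
Proof. reflexivity. Qed.

Lemma vcomb_ext {n} m w w' (P P' : nat -> Vec n) :
  (forall t, (t < m)%nat -> w t = w' t) -> (forall t, (t < m)%nat -> P t = P' t) ->
  vcomb m w P = vcomb m w' P'.
Proof.
  intros Hw HP. apply functional_extensionality; intro o. unfold vcomb.
  apply rsum_ext. intros t Ht. rewrite Hw, HP by auto. reflexivity.
Qed.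

Lemma vcomb_add_weights {n} m a b (P : nat -> Vec n) :
  vadd (vcomb m a P) (vcomb m b P) = vcomb m (fun t => a t + b t) P.
Proof.
  apply functional_extensionality; intro o. unfold vadd, vcomb. rewrite <- rsum_add.
  apply rsum_ext. intros; ring.
Qed.

Lemma vcomb_scale_weights {n} m c a (P : nat -> Vec n) :
  vscale c (vcomb m a P) = vcomb m (fun t => c * a t) P.
Proof.
  apply functional_extensionality; intro o. unfold vscale, vcomb. rewrite <- rsum_scale.
  apply rsum_ext. intros; ring.
Qed.

Lemma vcomb_unit_weight {n} m t0 v (P : nat -> Vec n) : (t0 < m)%nat ->
  vcomb m (unit_weight t0 v) P = vscale v (P t0).
Proof.
  intros Ht0. apply functional_extensionality; intro o. unfold vcomb, vscale.
  rewrite <- (rsum_unit_weight m t0 (v * P t0 o)) by auto.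
  apply rsum_ext. intros t Ht. unfold unit_weight.
  destruct (Nat.eq_dec t t0) as [->|]; ring.
Qed.

Lemma vcomb_snoc {n} m w (P : nat -> Vec n) y :
  vcomb (S m) w (snoc_fam P m y) = vadd (vcomb m w P) (vscale (w m) y).
Proof.
  rewrite vcomb_S, snoc_fam_last. f_equal.
  apply vcomb_ext; auto. intros; apply snoc_fam_lt; auto.
Qed.

Lemma vcomb_fam_app {n} K K' a b (P Q : nat -> Vec n) :
  vcomb (K + K') (fam_app K a b) (fam_app K P Q) = vadd (vcomb K a P) (vcomb K' b Q).
Proof.
  apply functional_extensionality; intro o. unfold vcomb, vadd. rewrite rsum_split.
  f_equal; apply rsum_ext; intros t Ht; unfold fam_app.
  - destruct (Nat.ltb_spec t K); [auto | lia].
  - destruct (Nat.ltb_spec (K + t) K); [lia|].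
    replace (K + t - K)%nat with t by lia. reflexivity.
Qed.

Lemma midpoint_affine {n} a b (x y z : Vec n) :
  midpoint (vadd (vscale a x) (vscale b z)) (vadd (vscale a y) (vscale b z)) =
  vadd (vscale a (midpoint x y)) (vscale b z).
Proof.
  apply functional_extensionality; intro o. unfold midpoint, vadd, vscale. field.
Qed.

Lemma lf_vzero {n} (psi : Vec n -> R) : linear_functional psi -> psi vzero = 0.
Proof.
  intros [_ Hs]. replace (@vzero n) with (vscale 0 (@vzero n)).
  - rewrite Hs; ring.
  - apply functional_extensionality; intro; unfold vscale, vzero; ring.
Qed.

Lemma lf_vcomb {n} (psi : Vec n -> R) m w P : linear_functional psi ->
  psi (vcomb m w P) = rsum m (fun t => w t * psi (P t)).
Proof.
  intros Hl. induction m as [|m IH].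
  - apply lf_vzero; auto.
  - rewrite vcomb_S. destruct Hl as [Ha Hs]. rewrite Ha, Hs, IH. reflexivity.
Qed.

Lemma lf_affine_comb {n} (psi : Vec n -> R) m w P c0 : linear_functional psi ->
  rsum m w = 1 -> (forall t, (t < m)%nat -> psi (P t) = c0) -> psi (vcomb m w P) = c0.
Proof.
  intros Hl Hw HP. rewrite lf_vcomb by auto.
  rewrite (rsum_ext _ _ (fun t => c0 * w t)) by (intros; rewrite HP by auto; ring).
  rewrite rsum_scale, Hw. ring.
Qed.

Lemma lf_average_lt {n} (psi : Vec n -> R) m P c0 t0 : linear_functional psi ->
  (forall t, (t < m)%nat -> psi (P t) <= c0) -> (t0 < m)%nat -> psi (P t0) < c0 ->
  psi (vcomb m (fun _ => / INR m) P) < c0.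
Proof.
  intros Hl Hle Ht0 Hlt.
  assert (Hm : 0 < / INR m) by (apply Rinv_0_lt_compat, lt_0_INR; lia).
  rewrite lf_vcomb by auto.
  apply Rlt_le_trans with (rsum m (fun _ => / INR m * c0)).
  - apply rsum_lt with t0; auto.
    + intros t Ht. apply Rmult_le_compat_l; [lra | auto].
    + apply Rmult_lt_compat_l; auto.
  - rewrite rsum_const. right. field. apply not_0_INR. lia.
Qed.

Lemma norm_vzero {n} (N : Vec n -> R) : is_norm N -> N vzero = 0.
Proof.
  intros (_ & _ & Hs & _). replace (@vzero n) with (vscale 0 (@vzero n)).
  - rewrite Hs, Rabs_R0; ring.
  - apply functional_extensionality; intro; unfold vscale, vzero; ring.
Qed.

Lemma norm_vcomb_le {n} (N : Vec n -> R) m w P : is_norm N ->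
  N (vcomb m w P) <= rsum m (fun t => Rabs (w t) * N (P t)).
Proof.
  intros HN. induction m as [|m IH].
  - rewrite norm_vzero by auto. simpl; lra.
  - rewrite vcomb_S. destruct HN as (_ & _ & Hs & Htri).
    eapply Rle_trans; [apply Htri|]. rewrite Hs. simpl. lra.
Qed.

Lemma vcomb_in_ball {n} (N : Vec n -> R) m w P : is_norm N ->
  (forall t, (t < m)%nat -> 0 <= w t) -> (forall t, (t < m)%nat -> N (P t) <= 1) ->
  rsum m w = 1 -> N (vcomb m w P) <= 1.
Proof.
  intros HN Hw HP Hs. eapply Rle_trans; [apply norm_vcomb_le; auto|].
  rewrite <- Hs. apply rsum_le. intros t Ht.
  rewrite Rabs_pos_eq by auto.
  assert (0 <= w t) by auto. assert (N (P t) <= 1) by auto. nra.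
Qed.

Lemma extrapolation_in_ball {n} (N : Vec n -> R) M (Q : nat -> Vec n) u g delta :
  is_norm N -> (forall t, (t < M)%nat -> N (Q t) <= 1) -> 0 < delta ->
  (forall t, (t < M)%nat -> delta <= u t) -> rsum M u = 1 -> rsum M g = 1 ->
  exists e, 0 < e /\ forall eps, 0 < eps -> eps <= e ->
    N (vadd (vscale (1 + eps) (vcomb M u Q)) (vscale (- eps) (vcomb M g Q))) <= 1.
Proof.
  intros HN HQ Hd Hu Hsu Hsg.
  set (A := rsum M (fun t => Rabs (g t))).
  assert (HA : 0 <= A) by (apply rsum_nonneg; intros; apply Rabs_pos).
  assert (HgA : forall t, (t < M)%nat -> g t <= A).
  { intros t Ht. eapply Rle_trans; [apply Rle_abs|].
    apply (rsum_ge_term M (fun t => Rabs (g t))); auto. intros; apply Rabs_pos. }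
  exists (delta / (1 + A)). split; [apply Rdiv_lt_0_compat; lra|].
  intros eps Heps Hle.
  assert (HeA : eps * A <= delta).
  { apply Rle_trans with (delta / (1 + A) * A); [apply Rmult_le_compat_r; auto|].
    apply Rmult_le_reg_r with (1 + A); [lra|].
    unfold Rdiv. replace (delta * / (1 + A) * A * (1 + A)) with (delta * A) by (field; lra).
    nra. }
  rewrite !vcomb_scale_weights, vcomb_add_weights.
  apply vcomb_in_ball; auto.
  - intros t Ht. assert (g t <= A) by auto. assert (delta <= u t) by auto. nra.
  - rewrite rsum_add, !rsum_scale, Hsu, Hsg. ring.
Qed.

(** * Affine independence *)

Definition aff_indep_fam {n} (m : nat) (P : nat -> Vec n) : Prop :=
  forall w, rsum m w = 0 -> vcomb m w P = vzero -> forall t, (t < m)%nat -> w t = 0.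

Definition has_aff_indep_fam {n} (A : vset n) (m : nat) : Prop :=
  exists P : nat -> Vec n, (forall t, (t < m)%nat -> A (P t)) /\ aff_indep_fam m P.

Lemma aff_indep_fam_inj {n} m (P : nat -> Vec n) a b : aff_indep_fam m P ->
  (a < m)%nat -> (b < m)%nat -> P a = P b -> a = b.
Proof.
  intros HP Ha Hb Hab. destruct (Nat.eq_dec a b) as [|Hne]; auto. exfalso.
  set (w := fun t => unit_weight a 1 t + unit_weight b (-1) t).
  assert (Hwa : w a = 0).
  { apply HP; auto; unfold w.
    - rewrite rsum_add, !rsum_unit_weight by auto. ring.
    - rewrite <- vcomb_add_weights, !vcomb_unit_weight, Hab by auto.
      apply functional_extensionality; intro; unfold vadd, vscale, vzero; ring. }
  unfold w, unit_weight in Hwa.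
  destruct (Nat.eq_dec a a), (Nat.eq_dec a b); [lia | lra | lia | lia].
Qed.

Lemma aff_indep_fam_pred {n} m (P : nat -> Vec n) :
  aff_indep_fam (S m) P -> aff_indep_fam m P.
Proof.
  intros HP w Hw Hc t Ht.
  rewrite <- (snoc_fam_lt w m 0) by auto. apply HP; [| |lia].
  - simpl. rewrite snoc_fam_last, (rsum_ext _ _ w), Hw by (intros; apply snoc_fam_lt; auto).
    ring.
  - rewrite vcomb_S, snoc_fam_last, (vcomb_ext m _ w P P), Hc
      by (intros; auto; apply snoc_fam_lt; auto).
    apply functional_extensionality; intro; unfold vadd, vscale, vzero; ring.
Qed.

Lemma has_aff_indep_fam_le {n} (A : vset n) j k : (j <= k)%nat ->
  has_aff_indep_fam A k -> has_aff_indep_fam A j.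
Proof.
  induction 1 as [|k Hjk IH]; auto. intros [P [HA HP]]. apply IH.
  exists P. split; [intros; apply HA; lia | apply aff_indep_fam_pred; auto].
Qed.

Lemma max_aff_indep_unique {n} (A : vset n) a b :
  has_aff_indep_fam A a -> ~ has_aff_indep_fam A (S a) ->
  has_aff_indep_fam A b -> ~ has_aff_indep_fam A (S b) -> a = b.
Proof.
  intros Ha Ha' Hb Hb'. destruct (Nat.lt_total a b) as [H|[H|H]]; auto; exfalso.
  - apply Ha'. apply (has_aff_indep_fam_le _ _ b); auto.
  - apply Hb'. apply (has_aff_indep_fam_le _ _ a); auto.
Qed.

Lemma aff_indep_snoc {n} m (P : nat -> Vec n) y : aff_indep_fam m P ->
  (forall al, rsum m al = 1 -> y <> vcomb m al P) -> aff_indep_fam (S m) (snoc_fam P m y).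
Proof.
  intros HP Hy w Hw Hc.
  rewrite vcomb_snoc in Hc. simpl in Hw.
  assert (Hwm : w m = 0).
  { apply NNPP. intros Hwm. apply (Hy (fun t => - w t / w m)).
    - unfold Rdiv. rewrite (rsum_ext _ _ (fun t => (- / w m) * w t)) by (intros; ring).
      rewrite rsum_scale. replace (rsum m w) with (- w m) by lra. field; auto.
    - apply functional_extensionality; intro o.
      assert (E := f_equal (fun v => v o) Hc). unfold vadd, vscale, vzero, vcomb in *.
      rewrite (rsum_ext _ _ (fun t => (- / w m) * (w t * P t o))) by (intros; field; auto).
      rewrite rsum_scale. simpl in E.
      replace (rsum m (fun t => w t * P t o)) with (- (w m * y o)) by lra. field; auto. }
  assert (Hrest : forall t, (t < m)%nat -> w t = 0).
  { apply HP; [lra|]. rewrite <- Hc, Hwm.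
    apply functional_extensionality; intro o. unfold vadd, vscale. ring. }
  intros t Ht. destruct (Nat.eq_dec t m) as [->|]; auto. apply Hrest; lia.
Qed.

Lemma aff_span {n} (A : vset n) m P y : aff_indep_fam m P ->
  (forall t, (t < m)%nat -> A (P t)) -> ~ has_aff_indep_fam A (S m) -> A y ->
  exists al, rsum m al = 1 /\ y = vcomb m al P.
Proof.
  intros HP HA Hmax Hy. apply NNPP; intros Hno. apply Hmax.
  exists (snoc_fam P m y). split.
  - intros t Ht. destruct (Nat.eq_dec t m) as [->|].
    + rewrite snoc_fam_last; auto.
    + rewrite snoc_fam_lt by lia. apply HA; lia.
  - apply aff_indep_snoc; auto. intros al Hal ->. eauto.
Qed.

Lemma sumR_rsum cs : sumR cs = rsum (length cs) (fun t => nth t cs 0).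
Proof.
  induction cs as [|c cs IH]; [reflexivity|].
  change (length (c :: cs)) with (1 + length cs)%nat. rewrite rsum_split.
  simpl. rewrite IH. ring.
Qed.

Lemma lincomb_vcomb {n} (L : list (Vec n)) cs : length cs = length L ->
  lincomb cs L = vcomb (length L) (fun t => nth t cs 0) (fun t => nth t L vzero).
Proof.
  revert cs. induction L as [|y L IH]; intros [|c cs] H; simpl in H; try discriminate.
  - reflexivity.
  - injection H as H. change (lincomb (c :: cs) (y :: L)) with (vadd (vscale c y) (lincomb cs L)).
    rewrite IH by auto. apply functional_extensionality; intro o.
    unfold vcomb, vadd, vscale. change (length (y :: L)) with (1 + length L)%nat.
    rewrite rsum_split. simpl. ring.
Qed.

Lemma nth_map_seq {A} (w : nat -> A) m t d : (t < m)%nat -> nth t (map w (seq 0 m)) d = w t.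
Proof.
  intros H. rewrite nth_indep with (d' := w O) by (rewrite length_map, length_seq; lia).
  rewrite map_nth, seq_nth by lia. reflexivity.
Qed.

Lemma has_aff_indep_iff {n} (A : vset n) m : has_aff_indep A m <-> has_aff_indep_fam A m.
Proof.
  split.
  - intros [l [Hlen [_ [HA Hl]]]]. exists (fun t => nth t l vzero). split.
    + intros t Ht. rewrite Forall_forall in HA. apply HA, nth_In. lia.
    + intros w Hw Hc t Ht.
      set (cs := map w (seq 0 m)).
      assert (Hcs : forall t, (t < m)%nat -> nth t cs 0 = w t) by (intros; apply nth_map_seq; auto).
      assert (Hlcs : length cs = length l) by (unfold cs; rewrite length_map, length_seq; auto).
      assert (Hz : Forall (fun c => c = 0) cs).
      { apply Hl; auto.
        - rewrite sumR_rsum, Hlcs, Hlen. transitivity (rsum m w); [apply rsum_ext|]; auto.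
        - rewrite lincomb_vcomb, Hlen by auto.
          transitivity (vcomb m w (fun t => nth t l vzero)); [apply vcomb_ext|]; auto. }
      rewrite <- Hcs by auto. rewrite Forall_nth in Hz. apply Hz. lia.
  - intros [P [HA HP]]. exists (map P (seq 0 m)).
    assert (Hl : length (map P (seq 0 m)) = m) by (rewrite length_map, length_seq; auto).
    split; [auto | split; [|split]].
    + apply NoDup_map_NoDup_ForallPairs; [|apply seq_NoDup].
      intros a b Ha Hb. apply in_seq in Ha, Hb. apply (aff_indep_fam_inj m); auto; lia.
    + apply Forall_forall. intros x Hx. apply in_map_iff in Hx.
      destruct Hx as [t [<- Ht]]. apply in_seq in Ht. apply HA. lia.
    + intros cs Hlen Hs Hc. apply Forall_nth. intros i d Hi.
      rewrite nth_indep with (d' := 0) by auto. rewrite Hlen, Hl in Hi.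
      apply (HP (fun t => nth t cs 0)); auto.
      * rewrite sumR_rsum, Hlen, Hl in Hs. auto.
      * rewrite lincomb_vcomb, Hl in Hc by auto. rewrite <- Hc.
        apply vcomb_ext; auto. intros; rewrite nth_map_seq; auto.
Qed.

(** * Faces of the unit ball and their facets *)

(** [face_of P F] unfolds to [exists psi c, exposed_by P F psi c]. *)
Definition exposed_by {n} (P F : vset n) (psi : Vec n -> R) (c : R) : Prop :=
  linear_functional psi /\ (forall y, P y -> psi y <= c) /\
  same_set F (fun x => P x /\ psi x = c).

Lemma facet_dims {n} (F G : vset n) : facet_of F G -> exists K,
  has_aff_indep_fam F (S K) /\ ~ has_aff_indep_fam F (S (S K)) /\
  has_aff_indep_fam G K /\ ~ has_aff_indep_fam G (S K).
Proof.
  intros [_ [d [[k [Hk [HF HF']]] [K [HK [HG HG']]]]]].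
  assert (k = S K) by lia. subst k. exists K. rewrite <- !has_aff_indep_iff. tauto.
Qed.

Lemma facet_incl_eq {n} (F G G' : vset n) : facet_of F G -> facet_of F G' ->
  (forall y, G y -> G' y) -> same_set G G'.
Proof.
  intros HG HG' Hsub.
  destruct (facet_dims F G HG) as [K (HF & HFmax & [P [HPG HP]] & _)].
  destruct HG as [[psi [c0 (Hl & _ & HGe)]] _].
  destruct (facet_dims F G' HG') as [K' (HF' & HFmax' & _ & HG'max)].
  assert (K' = K) by (assert (S K' = S K) by (eapply max_aff_indep_unique; eauto); lia).
  subst K'. destruct HG' as [[psi' [c' (_ & _ & HG'e)]] _].
  intros y. split; [apply Hsub|]. intros Hy'. apply NNPP; intros Hy. apply HG'max.
  exists (snoc_fam P K y). split.
  - intros t Ht. destruct (Nat.eq_dec t K) as [->|].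
    + rewrite snoc_fam_last; auto.
    + rewrite snoc_fam_lt by lia. apply Hsub, HPG. lia.
  - apply aff_indep_snoc; auto. intros al Hal Hyc. apply Hy, HGe. split.
    + apply HG'e in Hy'. tauto.
    + rewrite Hyc. apply lf_affine_comb; auto. intros t Ht. apply HGe, HPG; auto.
Qed.

Lemma facet_basis_leaves {n} (F G G' : vset n) psi' c' K P :
  facet_of F G -> facet_of F G' -> ~ same_set G G' -> exposed_by F G' psi' c' ->
  (forall t, (t < K)%nat -> G (P t)) -> aff_indep_fam K P -> ~ has_aff_indep_fam G (S K) ->
  exists t, (t < K)%nat /\ psi' (P t) < c'.
Proof.
  intros HG HG' Hne (Hl & Hle & HG'e) HPG HP Hmax.
  pose proof HG as [[psi [c0 (_ & _ & HGe)]] _].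
  assert (HGF : forall y, G y -> F y) by (intros y Hy; apply HGe in Hy; tauto).
  apply NNPP; intros Hno. apply Hne, (facet_incl_eq F); auto.
  intros y Hy. apply HG'e. split; [auto|].
  destruct (aff_span G K P y HP HPG Hmax Hy) as [al [Hal ->]].
  apply lf_affine_comb; auto. intros t Ht.
  destruct (Rle_lt_or_eq_dec _ _ (Hle _ (HGF _ (HPG t Ht)))) as [Hlt|]; auto.
  exfalso; eauto.
Qed.

Lemma lf_le_norm {n} (N : Vec n -> R) phi c : is_norm N -> linear_functional phi ->
  (forall y, unit_ball N y -> phi y <= c) -> forall y, phi y <= c * N y.
Proof.
  intros HN Hl Hle y. pose proof HN as (Hpos & Hdef & Hs & _). pose proof Hl as [_ Hphis].
  destruct (Req_dec (N y) 0) as [H0|H0].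
  - apply Hdef in H0. subst y. rewrite lf_vzero, norm_vzero by auto. lra.
  - assert (Hp : 0 < N y) by (pose proof (Hpos y); lra).
    assert (H := Hle (vscale (/ N y) y)). unfold unit_ball in H.
    rewrite Hs, Hphis, Rabs_pos_eq in H by (left; apply Rinv_0_lt_compat; auto).
    rewrite Rinv_l in H by lra.
    apply Rmult_le_reg_l with (/ N y); [apply Rinv_0_lt_compat; auto|].
    replace (/ N y * (c * N y)) with c by (field; lra). lra.
Qed.

Lemma proper_face_level_pos {n} (N : Vec n -> R) F phi c : is_norm N ->
  exposed_by (unit_ball N) F phi c -> ~ same_set F (unit_ball N) -> 0 < c.
Proof.
  intros HN (Hl & Hle & HF) Hp.
  assert (0 <= c).
  { rewrite <- (lf_vzero phi Hl). apply Hle. unfold unit_ball. rewrite norm_vzero; auto; lra. }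
  destruct (Req_dec c 0) as [Hc|]; [|lra]. exfalso. apply Hp.
  intros x. rewrite (HF x). split; [tauto|]. intros Hx. split; auto.
  assert (phi x <= c) by auto.
  assert (Hm : phi (vscale (-1) x) <= c).
  { apply Hle. unfold unit_ball in *. destruct HN as (_ & _ & Hs & _).
    rewrite Hs. replace (Rabs (-1)) with 1 by (rewrite Rabs_left; lra). lra. }
  destruct Hl as [_ Hs]. rewrite Hs in Hm. lra.
Qed.

Lemma exposed_ball_comb {n} (N : Vec n -> R) F phi c m w P : is_norm N ->
  exposed_by (unit_ball N) F phi c -> (forall t, (t < m)%nat -> 0 <= w t) ->
  rsum m w = 1 -> (forall t, (t < m)%nat -> F (P t)) -> F (vcomb m w P).
Proof.
  intros HN (Hl & _ & HF) Hw Hs HP. apply HF. split.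
  - apply vcomb_in_ball; auto. intros t Ht. apply HF, HP; auto.
  - apply lf_affine_comb; auto. intros t Ht. apply HF, HP; auto.
Qed.

Lemma level_norm_ge_1 {n} (N : Vec n -> R) F phi c y : is_norm N ->
  exposed_by (unit_ball N) F phi c -> 0 < c -> phi y = c -> 1 <= N y.
Proof.
  intros HN (Hl & Hle & _) Hc Hy. pose proof (lf_le_norm N phi c HN Hl Hle y) as H.
  rewrite Hy in H. apply Rmult_le_reg_l with c; lra.
Qed.

(** * Pushing the barycenters of the facets off a face *)

Lemma uniformly_small m (Q : nat -> R -> Prop) :
  (forall i, (i < m)%nat -> exists e, 0 < e /\ forall eps, 0 < eps -> eps <= e -> Q i eps) ->
  exists e, 0 < e /\ forall i, (i < m)%nat -> forall eps, 0 < eps -> eps <= e -> Q i eps.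
Proof.
  induction m as [|m IH]; intros H.
  - exists 1. split; [lra | intros; lia].
  - destruct IH as [e [He HQ]]; [intros; apply H; lia|].
    destruct (H m) as [e' [He' HQ']]; [lia|].
    exists (Rmin e e'). split; [apply Rmin_glb_lt; auto|].
    intros i Hi eps Heps Hle. destruct (Nat.eq_dec i m) as [->|].
    + apply HQ'; auto. eapply Rle_trans; [exact Hle | apply Rmin_r].
    + apply HQ; [lia | auto |]. eapply Rle_trans; [exact Hle | apply Rmin_l].
Qed.

(** [f] facets of a [K]-dimensional face [F]: the [i]-th one is [F ∩ {psi i = ci i}]
    and [P i] lists [K] affinely independent points of it. *)
Record facet_config {n} (F : vset n) (f K : nat) (psi : nat -> Vec n -> R) (ci : nat -> R)
    (P : nat -> nat -> Vec n) : Prop := {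
  fc_dim : ~ has_aff_indep_fam F (S (S K));
  fc_lf : forall i, (i < f)%nat -> linear_functional (psi i);
  fc_le : forall i y, (i < f)%nat -> F y -> psi i y <= ci i;
  fc_mem : forall i t, (i < f)%nat -> (t < K)%nat -> F (P i t);
  fc_on : forall i t, (i < f)%nat -> (t < K)%nat -> psi i (P i t) = ci i;
  fc_indep : forall i, (i < f)%nat -> aff_indep_fam K (P i);
  fc_sep : forall i j, (i < f)%nat -> (j < f)%nat -> i <> j ->
    exists t, (t < K)%nat /\ psi j (P i t) < ci j
}.

Arguments fc_dim {n F f K psi ci P}.
Arguments fc_lf {n F f K psi ci P}.
Arguments fc_le {n F f K psi ci P}.
Arguments fc_mem {n F f K psi ci P}.
Arguments fc_on {n F f K psi ci P}.
Arguments fc_indep {n F f K psi ci P}.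
Arguments fc_sep {n F f K psi ci P}.

Section Construction.

Variables (n : nat) (N : Vec n -> R) (F : vset n) (phi : Vec n -> R) (c : R).
Variables (f K : nat) (psi : nat -> Vec n -> R) (ci : nat -> R) (P : nat -> nat -> Vec n).
Hypothesis HN : is_norm N.
Hypothesis HF : exposed_by (unit_ball N) F phi c.
Hypothesis Hc : 0 < c.
Hypothesis Hf : (2 <= f)%nat.
Hypothesis Hcfg : facet_config F f K psi ci P.

Lemma face_in_ball y : F y -> N y <= 1.
Proof. intros Hy. apply HF in Hy. apply Hy. Qed.

Lemma K_pos : (1 <= K)%nat.
Proof. destruct (fc_sep Hcfg 0 1) as [t [Ht _]]; lia. Qed.

Definition barycenter i : Vec n := vcomb K (fun _ => / INR K) (P i).

Definition center : Vec n := vcomb f (fun _ => / INR f) barycenter.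

(** The candidate M-set: the barycenters of the facets pushed away from [center]. *)
Definition pushed (eps : R) i : Vec n :=
  vadd (vscale (1 + eps) (barycenter i)) (vscale (- eps) center).

Lemma barycenter_in_face i : (i < f)%nat -> F (barycenter i).
Proof.
  intros Hi. apply (exposed_ball_comb N F phi c); auto.
  - intros; apply uniform_weight_pos, K_pos.
  - apply rsum_uniform, K_pos.
  - intros t Ht. apply (fc_mem Hcfg); auto.
Qed.

Lemma psi_barycenter_self i : (i < f)%nat -> psi i (barycenter i) = ci i.
Proof.
  intros Hi. apply lf_affine_comb.
  - apply (fc_lf Hcfg); auto.
  - apply rsum_uniform, K_pos.
  - intros t Ht. apply (fc_on Hcfg); auto.
Qed.

Lemma psi_barycenter_other i j : (i < f)%nat -> (j < f)%nat -> i <> j ->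
  psi j (barycenter i) < ci j.
Proof.
  intros Hi Hj Hij. destruct (fc_sep Hcfg i j Hi Hj Hij) as [t0 [Ht0 Hlt]].
  apply lf_average_lt with t0; auto.
  - apply (fc_lf Hcfg); auto.
  - intros t Ht. apply (fc_le Hcfg); auto. apply (fc_mem Hcfg); auto.
Qed.

Lemma center_in_face : F center.
Proof.
  apply (exposed_ball_comb N F phi c); auto.
  - intros; apply uniform_weight_pos; lia.
  - apply rsum_uniform; lia.
  - apply barycenter_in_face.
Qed.

Lemma psi_center_lt i : (i < f)%nat -> psi i center < ci i.
Proof.
  intros Hi. set (j := if Nat.eq_dec i 0 then 1%nat else 0%nat).
  assert (Hj : (j < f)%nat /\ j <> i) by (unfold j; destruct (Nat.eq_dec i 0); lia).
  apply lf_average_lt with j; [apply (fc_lf Hcfg); auto | | tauto |].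
  - intros t Ht. apply (fc_le Hcfg); auto. apply barycenter_in_face; auto.
  - apply psi_barycenter_other; tauto.
Qed.

Lemma lf_pushed th eps i : linear_functional th ->
  th (pushed eps i) = (1 + eps) * th (barycenter i) - eps * th center.
Proof. intros [Ha Hs]. unfold pushed. rewrite Ha, !Hs. ring. Qed.

Lemma phi_pushed eps i : (i < f)%nat -> phi (pushed eps i) = c.
Proof.
  intros Hi. pose proof HF as (Hl & _ & HFe).
  rewrite lf_pushed by auto.
  rewrite (proj2 (proj1 (HFe _) (barycenter_in_face i Hi))), (proj2 (proj1 (HFe _) center_in_face)).
  ring.
Qed.

Lemma pushed_norm_gt_1 eps i : 0 < eps -> (i < f)%nat -> 1 < N (pushed eps i).
Proof.
  intros Heps Hi. apply Rnot_le_lt. intros Hb.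
  assert (Hin : F (pushed eps i)) by (apply HF; split; [auto | apply phi_pushed; auto]).
  pose proof (fc_le Hcfg i _ Hi Hin) as H.
  rewrite lf_pushed, psi_barycenter_self in H by (auto; apply (fc_lf Hcfg); auto).
  pose proof (psi_center_lt i Hi). nra.
Qed.

Lemma pushed_inj eps i j : 0 <= eps -> (i < f)%nat -> (j < f)%nat ->
  pushed eps i = pushed eps j -> i = j.
Proof.
  intros Heps Hi Hj Hx. destruct (Nat.eq_dec i j) as [|Hij]; auto. exfalso.
  assert (Hl : linear_functional (psi j)) by (apply (fc_lf Hcfg); auto).
  assert (E := f_equal (psi j) Hx). rewrite !lf_pushed, psi_barycenter_self in E by auto.
  pose proof (psi_barycenter_other i j Hi Hj Hij). nra.
Qed.

Lemma center_affine_coords i j : (i < f)%nat -> (j < f)%nat -> i <> j ->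
  exists t0 al, (t0 < K)%nat /\ rsum (S K) al = 1 /\
    center = vcomb (S K) al (snoc_fam (P i) K (P j t0)).
Proof.
  intros Hi Hj Hij.
  destruct (fc_sep Hcfg j i Hj Hi (not_eq_sym Hij)) as [t0 [Ht0 Hlt]].
  assert (Hbasis : aff_indep_fam (S K) (snoc_fam (P i) K (P j t0))).
  { apply aff_indep_snoc; [apply (fc_indep Hcfg); auto|]. intros al Hal Heq.
    assert (psi i (P j t0) = ci i).
    { rewrite Heq. apply lf_affine_comb; auto; [apply (fc_lf Hcfg); auto|].
      intros; apply (fc_on Hcfg); auto. }
    lra. }
  assert (Hmem : forall t, (t < S K)%nat -> F (snoc_fam (P i) K (P j t0) t)).
  { intros t Ht. destruct (Nat.eq_dec t K) as [->|].
    - rewrite snoc_fam_last. apply (fc_mem Hcfg); auto.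
    - rewrite snoc_fam_lt by lia. apply (fc_mem Hcfg); auto; lia. }
  destruct (aff_span F (S K) _ center Hbasis Hmem (fc_dim Hcfg) center_in_face)
    as [al [Hal Hcenter]].
  exists t0, al. auto.
Qed.

Lemma pushed_midpoint_in_ball i j : (i < f)%nat -> (j < f)%nat -> i <> j ->
  exists e, 0 < e /\ forall eps, 0 < eps -> eps <= e ->
    N (midpoint (pushed eps i) (pushed eps j)) <= 1.
Proof.
  intros Hi Hj Hij. pose proof K_pos as HK.
  destruct (center_affine_coords i j Hi Hj Hij) as (t0 & al & Ht0 & Hal & Hcenter).
  set (Q := fam_app K (P i) (P j)).
  set (u := fun _ : nat => / INR K).
  set (g := fam_app K al (unit_weight t0 (al K))).
  assert (Hcg : center = vcomb (K + K) g Q).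
  { unfold g, Q. rewrite vcomb_fam_app, vcomb_unit_weight, Hcenter, vcomb_snoc by auto.
    reflexivity. }
  assert (Hmid : midpoint (barycenter i) (barycenter j) =
                 vcomb (K + K) (fun t => 1 / 2 * fam_app K u u t) Q).
  { rewrite <- vcomb_scale_weights. unfold Q. rewrite vcomb_fam_app. reflexivity. }
  destruct (extrapolation_in_ball N (K + K) Q (fun t => 1 / 2 * fam_app K u u t) g
              (/ (2 * INR K))) as [e [He Hext]]; auto.
  - intros t Ht. apply face_in_ball. unfold Q, fam_app.
    destruct (Nat.ltb_spec t K); apply (fc_mem Hcfg); auto; lia.
  - apply Rinv_0_lt_compat. apply (le_INR 1) in HK. simpl in HK. lra.
  - intros t Ht. unfold fam_app, u. apply (le_INR 1) in HK. simpl in HK.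
    destruct (t <? K)%nat; right; field; lra.
  - rewrite rsum_scale, rsum_fam_app. unfold u. rewrite rsum_uniform by auto. lra.
  - unfold g. rewrite rsum_fam_app, rsum_unit_weight by auto. exact Hal.
  - exists e. split; auto. intros eps Heps Hle.
    unfold pushed. rewrite midpoint_affine, Hmid, Hcg. apply Hext; auto.
Qed.

Lemma Mset_of_facet_config :
  exists X : list (Vec n), NoDup X /\ length X = f /\ M_set N (fun x => In x X).
Proof.
  destruct (uniformly_small f (fun i eps => forall j, (j < f)%nat -> i <> j ->
              N (midpoint (pushed eps i) (pushed eps j)) <= 1)) as [eps [Heps Hsmall]].
  { intros i Hi.
    destruct (uniformly_small f (fun j eps => i <> j ->
                N (midpoint (pushed eps i) (pushed eps j)) <= 1)) as [e [He H]].
    - intros j Hj. destruct (Nat.eq_dec i j) as [->|Hij].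
      + exists 1. split; [lra | intros; contradiction].
      + destruct (pushed_midpoint_in_ball i j Hi Hj Hij) as [e [He H]]. eauto.
    - exists e. split; [auto | intros eps Heps Hle j Hj; apply H; auto]. }
  exists (map (pushed eps) (seq 0 f)). split; [|split].
  - apply NoDup_map_NoDup_ForallPairs; [|apply seq_NoDup].
    intros a b Ha Hb. apply in_seq in Ha, Hb. apply pushed_inj; lra || lia.
  - rewrite length_map, length_seq. reflexivity.
  - split.
    + intros a b Ha Hb Hab. apply in_map_iff in Ha, Hb.
      destruct Ha as [i [<- Hi]], Hb as [j [<- Hj]]. apply in_seq in Hi, Hj.
      assert (i <> j) by (intros ->; auto).
      apply Rle_antisym.
      * apply (Hsmall i); auto; lia || lra.
      * apply (level_norm_ge_1 N F phi c); auto.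
        pose proof HF as ([Ha Hs] & _). unfold midpoint.
        rewrite Hs, Ha, !phi_pushed by lia. field.
    + intros a Ha. apply in_map_iff in Ha. destruct Ha as [i [<- Hi]]. apply in_seq in Hi.
      apply pushed_norm_gt_1; auto; lia.
Qed.

End Construction.

Lemma facet_config_of_facets {n} (F : vset n) f : num_facets F f -> (1 <= f)%nat ->
  exists K psi ci P, facet_config F f K psi ci P.
Proof.
  intros [l [Hlen [Hall [Hdist _]]]] Hf.
  set (G := fun i => nth i l (fun _ : Vec n => False)).
  assert (HG : forall i, (i < f)%nat -> facet_of F (G i)).
  { intros i Hi. rewrite Forall_forall in Hall. apply Hall, nth_In. lia. }
  destruct (facet_dims F (G O) (HG O ltac:(lia))) as [K (HFK & HFK' & _)].
  assert (Hdata : forall i, exists d : (Vec n -> R) * R * (nat -> Vec n), (i < f)%nat ->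
    exposed_by F (G i) (fst (fst d)) (snd (fst d)) /\ (forall t, (t < K)%nat -> G i (snd d t)) /\
    aff_indep_fam K (snd d) /\ ~ has_aff_indep_fam (G i) (S K)).
  { intros i. destruct (Nat.lt_ge_cases i f) as [Hi|];
      [|exists (fun _ => 0, 0, fun _ => @vzero n); lia].
    destruct (facet_dims F (G i) (HG i Hi)) as [Ki (HFi & HFimax & [P [HP1 HP2]] & HGi)].
    assert (Ki = K) by (assert (S Ki = S K) by (eapply max_aff_indep_unique; eauto); lia).
    subst Ki. destruct (HG i Hi) as [[psi [ci Hexp]] _].
    exists (psi, ci, P). auto. }
  destruct (functional_choice _ Hdata) as [d Hd].
  exists K, (fun i => fst (fst (d i))), (fun i => snd (fst (d i))), (fun i => snd (d i)).
  assert (HGF : forall i y, (i < f)%nat -> G i y -> F y /\ fst (fst (d i)) y = snd (fst (d i))).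
  { intros i y Hi Hy. destruct (Hd i Hi) as ((_ & _ & He) & _). apply He; auto. }
  constructor; auto.
  - intros i Hi. apply Hd; auto.
  - intros i y Hi. apply Hd; auto.
  - intros i t Hi Ht. apply (HGF i); auto. apply Hd; auto.
  - intros i t Hi Ht. apply (HGF i); auto. apply Hd; auto.
  - intros i Hi. apply Hd; auto.
  - intros i j Hi Hj Hij. destruct (Hd i Hi) as (_ & HPG & HP & Hmax).
    apply (facet_basis_leaves F (G i) (G j)); auto; [apply Hdist; auto | apply Hd; auto].
Qed.

Lemma exists_norm_gt_1 {n} (N : Vec n -> R) (y : Vec n) :
  is_norm N -> y <> vzero -> exists x, 1 < N x.
Proof.
  intros (Hpos & Hdef & Hs & _) Hy.
  assert (Hp : 0 < N y)
    by (destruct (Hpos y) as [|H]; auto; symmetry in H; apply Hdef in H; tauto).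
  exists (vscale (2 / N y) y). rewrite Hs, Rabs_pos_eq.
  - replace (2 / N y * N y) with 2 by (field; lra). lra.
  - left. apply Rdiv_lt_0_compat; lra.
Qed.

Lemma Mset_of_proper_face {n} (N : Vec n -> R) F f : is_norm N ->
  proper_face_of (unit_ball N) F -> num_facets F f ->
  exists X : list (Vec n), NoDup X /\ length X = f /\ M_set N (fun x => In x X).
Proof.
  intros HN [[phi [c HF]] Hprop] Hfac.
  assert (Hc : 0 < c) by (eapply proper_face_level_pos; eauto).
  destruct f as [|[|f]].
  - exists []. split; [constructor | split; [reflexivity | split; simpl; tauto]].
  - destruct Hfac as [[|G l] [Hlen [Hall _]]]; [discriminate|]. pose proof (Forall_inv Hall) as HG.
    destruct (facet_dims F G HG) as [K ([P [HPF _]] & _)].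
    assert (HP0 : P O <> vzero).
    { intros Hzero. pose proof HF as (Hl & _ & HFe).
      assert (Hphi := proj2 (proj1 (HFe _) (HPF O ltac:(lia)))).
      rewrite Hzero, lf_vzero in Hphi by auto. lra. }
    destruct (exists_norm_gt_1 N (P O) HN HP0) as [x Hx].
    exists [x]. split; [repeat constructor; simpl; tauto | split; [reflexivity | split]].
    + intros a b [<-|[]] [<-|[]]. tauto.
    + intros a [<-|[]]. lra.
  - destruct (facet_config_of_facets F (S (S f)) Hfac ltac:(lia)) as (K & psi & ci & P & Hcfg).
    eapply Mset_of_facet_config; eauto. lia.
Qed.

Theorem mainTheorem17 (n : nat) (N : Vec n -> R) (f : nat) (v : option nat) :
  is_norm N ->
  is_polytope (unit_ball N) ->
  max_facets_proper_face (unit_ball N) f ->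
  m_value N v ->
  enat_ge v f.
Proof.
  intros HN _ [[F [HFp HFn]] _] Hm.
  destruct v as [k|]; [|exact I]. destruct Hm as [_ Hcover].
  destruct (Mset_of_proper_face N F f HN HFp HFn) as [X (HX & Hlen & HM)].
  destruct (Hcover _ HM) as [l [Hl Hin]].
  simpl. rewrite <- Hlen. eapply Nat.le_trans; [|exact Hl].
  apply NoDup_incl_length; auto.
Qed.
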